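(* Let $\mathbb{K}$ be a positive commutative monoid and let $H$ be a hypergraph. If $H$ has the local-to-global consistency property for $\mathbb{K}$-relations, then for every subset $W$ of the set of vertices of $H$, the hypergraph $R(H[W])$ also has the local-to-global consistency property for $\mathbb{K}$-relations.
   Context: A commutative monoid $\mathbb{K}=(K,+,0)$ is positive if $p+q=0$ implies $p=q=0$. Attributes have domains; for a finite attribute set $X$, an $X$-tuple assigns each $A\in X$ a value in its domain; $t[Y]$ is restriction. A $\mathbb{K}$-relation over $X$ is a finitely supported function $R$ from $X$-tuples to $K$ (support $R'$); marginals are $R[Y](t)=\sum_{r\in R',r[Y]=t}R(r)$. For a hypergraph with hyperedges $X_1,\dots,X_m$ (vertices as attributes), a collection $R_1(X_1),\dots,R_m(X_m)$ is pairwise consistent if every two $R_i,R_j$ have a $\mathbb{K}$-relation $W$ over $X_i\cup X_j$ with $W[X_i]=R_i$, $W[X_j]=R_j$, and globally consistent if some $W$ over $X_1\cup\dots\cup X_m$ has $W[X_i]=R_i$ for all $i$. A hypergraph has the local-to-global consistency property for $\mathbb{K}$-relations if every pairwise consistent collection of $\mathbb{K}$-relations over its hyperedges is globally consistent. For $H=(V,E)$ and $W\subseteq V$, $H[W]$ is the hypergraph with vertex set $W$ and hyperedges the non-empty sets $X\cap W$, $X\in E$. The reduction $R(H)$ of a hypergraph $H$ has the same vertices and as hyperedges those hyperedges of $H$ not contained in any other hyperedge of $H$. *)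

From HB Require Import structures.
From mathcomp Require Import all_boot all_order all_algebra.
Set Implicit Arguments. Unset Strict Implicit. Unset Printing Implicit Defensive.
Import Order.TTheory GRing.Theory Num.Theory.
Local Open Scope ring_scope.

Definition positive_monoid (K : nmodType) : Prop :=
  forall p q : K, p + q = 0 -> p = 0 /\ q = 0.

Section Relations.
Variables (V : finType) (D : V -> eqType).

(* Partial tuples: an assignment to every attribute v of either a value in
   its domain D v or None (undefined).  An X-tuple is a partial tuple whose
   set of defined attributes is exactly X. *)
Definition ptuple := {dffun forall v : V, option (D v)}.

Definition pdom (t : ptuple) : {set V} := [set v | t v != None].

Definition restr (Y : {set V}) (t : ptuple) : ptuple :=
  [ffun v => if v \in Y then t v else None].

(* A K-relation over X: a function from X-tuples to K, represented as a
   function on partial tuples that vanishes outside X-tuples, together with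
   its (finite, duplicate-free) support R'. *)
Record krel (K : nmodType) (X : {set V}) := KRel {
  kval :> ptuple -> K;
  ksupp : seq ptuple;
  ksupp_uniq : uniq ksupp;
  ksupp_spec : forall r, (r \in ksupp) = (kval r != 0);
  ksupp_dom : forall r, r \in ksupp -> pdom r = X
}.

Definition marg (K : nmodType) (X : {set V}) (R : krel K X) (Y : {set V})
  (t : ptuple) : K :=
  \sum_(r <- ksupp R | restr Y r == t) R r.

End Relations.

Record hypergraph (V : finType) := Hypergraph {
  hverts : {set V};
  hedges : {set {set V}}
}.

Definition wf_hypergraph (V : finType) (H : hypergraph V) : Prop :=
  forall X, X \in hedges H -> X \subset hverts H.

Definition induced (V : finType) (H : hypergraph V) (W : {set V}) :
  hypergraph V :=
  Hypergraph W [set X :&: W | X in [set X in hedges H | X :&: W != set0]].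

Definition reduction (V : finType) (H : hypergraph V) : hypergraph V :=
  Hypergraph (hverts H)
    [set X in hedges H | ~~ [exists Y in hedges H, (X \subset Y) && (X != Y)]].

Definition pairwise_consistent (K : nmodType) (V : finType) (D : V -> eqType)
  (E : {set {set V}}) (R : forall X : {set V}, krel D K X) : Prop :=
  forall Xi Xj, Xi \in E -> Xj \in E ->
    exists W : krel D K (Xi :|: Xj),
      (forall t, marg W Xi t = R Xi t) /\ (forall t, marg W Xj t = R Xj t).

Definition globally_consistent (K : nmodType) (V : finType) (D : V -> eqType)
  (E : {set {set V}}) (R : forall X : {set V}, krel D K X) : Prop :=
  exists W : krel D K (\bigcup_(X in E) X),
    forall X, X \in E -> forall t, marg W X t = R X t.

Definition local_to_global (K : nmodType) (V : finType) (H : hypergraph V)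
  : Prop :=
  forall (D : V -> eqType) (R : forall X : {set V}, krel D K X),
    pairwise_consistent (hedges H) R -> globally_consistent (hedges H) R.

From mathcomp Require Import all_boot all_order all_algebra.
Set Implicit Arguments. Unset Strict Implicit. Unset Printing Implicit Defensive.
Import GRing.Theory.
Local Open Scope ring_scope.

(* Let R be a pairwise consistent family on the edges of R(H[W]); these are
   the maximal nonempty sets X :&: W, X an edge of H.  Give every attribute
   one extra dummy value and pick, for every edge X of H, a reduced edge Z
   containing X :&: W.  Padding the tuples of R Z with the dummy value on X :\: W gives a
   K-relation over X, and this family over the edges of H is again pairwise
   consistent, so it has a global witness G.  Removing the padding from G
   yields a witness for R: when X :&: W is itself a reduced edge, maximality
   forces Z = X :&: W, so the marginals are right; and by positivity every
   support tuple of G has a marginal in the support of some padded relation,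
   so it carries genuine values on all reduced edges. *)

Section KRelations.
Variables (V : finType) (K : nmodType).

Definition mass (D : V -> eqType) X (R : krel D K X) (P : pred (ptuple D)) : K :=
  \sum_(r <- ksupp R | P r) R r.

Lemma margE (D : V -> eqType) X (R : krel D K X) Y t :
  marg R Y t = mass R (fun r => restr Y r == t).
Proof. by []. Qed.

Lemma eq_mass (D : V -> eqType) X (R : krel D K X) (P Q : pred (ptuple D)) :
  {in ksupp R, P =1 Q} -> mass R P = mass R Q.
Proof.
move=> eqPQ; rewrite /mass big_seq_cond [RHS]big_seq_cond; apply: eq_bigl => r.
by case: (boolP (r \in ksupp R)) => //= /eqPQ ->.
Qed.

Lemma eq_mass_fun (D : V -> eqType) X1 X2 (R1 : krel D K X1) (R2 : krel D K X2) P :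
  R1 =1 R2 -> mass R1 P = mass R2 P.
Proof.
move=> eqR; have perm_supp : perm_eq (ksupp R1) (ksupp R2).
  by apply: uniq_perm; rewrite ?ksupp_uniq // => s; rewrite !ksupp_spec eqR.
by rewrite /mass (perm_big _ perm_supp); apply: eq_bigr => s _; rewrite eqR.
Qed.

Lemma mass_pred1 (D : V -> eqType) X (R : krel D K X) t :
  mass R (fun r => r == t) = R t.
Proof.
rewrite /mass; have [t_supp | t_nsupp] := boolP (t \in ksupp R).
  rewrite (big_rem t) //= eqxx big1_seq ?addr0 // => r /andP[/eqP -> ].
  by rewrite mem_rem_uniqF ?ksupp_uniq.
rewrite big1_seq; last by move=> r /andP[/eqP -> ]; rewrite (negbTE t_nsupp).
by move: t_nsupp; rewrite ksupp_spec negbK => /eqP.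
Qed.

Lemma mass_neq0_has (D : V -> eqType) X (R : krel D K X) (P : pred (ptuple D)) :
  mass R P != 0 -> has P (ksupp R).
Proof.
apply: contraR => /hasPn noP; rewrite /mass big1_seq // => r /andP[Pr /noP].
by rewrite Pr.
Qed.

Lemma positive_mass_neq0 (D : V -> eqType) X (R : krel D K X) (P : pred (ptuple D)) r :
  positive_monoid K -> r \in ksupp R -> P r -> mass R P != 0.
Proof.
move=> posK r_supp Pr; apply/eqP.
rewrite /mass big_mkcond (bigD1_seq r) ?ksupp_uniq //= Pr => /posK[Rr0 _].
by move: r_supp; rewrite ksupp_spec Rr0 eqxx.
Qed.

Lemma big_undup_partition (A B : eqType) (s : seq A) (f : A -> B) (F : A -> K)
    (P : pred B) :
  \sum_(y <- undup (map f s) | P y) \sum_(x <- s | f x == y) F x =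
  \sum_(x <- s | P (f x)) F x.
Proof.
under eq_bigr => y _ do rewrite big_mkcond /=.
rewrite exchange_big /= [RHS]big_mkcond /= !big_seq; apply: eq_bigr => x xs.
have fx_in : f x \in undup (map f s) by rewrite mem_undup map_f.
rewrite (big_rem (f x)) //= eqxx big1_seq ?addr0 // => y /andP[_ y_in].
by case: eqP => // fx_y; move: y_in; rewrite -fx_y mem_rem_uniqF ?undup_uniq.
Qed.

Section Pushforward.
Variables (D1 D2 : V -> eqType) (X : {set V}) (R : krel D1 K X)
  (f : ptuple D1 -> ptuple D2) (Y : {set V}).

Definition kpush_fun (s : ptuple D2) : K :=
  if pdom s == Y then \sum_(r <- ksupp R | f r == s) R r else 0.

Definition kpush_supp : seq (ptuple D2) :=
  [seq s <- undup (map f (ksupp R)) | kpush_fun s != 0].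

Lemma kpush_supp_uniq : uniq kpush_supp.
Proof. by rewrite filter_uniq ?undup_uniq. Qed.

Lemma kpush_supp_spec s : (s \in kpush_supp) = (kpush_fun s != 0).
Proof.
rewrite mem_filter andb_idr // => kps_neq0; rewrite mem_undup.
move: kps_neq0; rewrite /kpush_fun; case: (pdom s == Y); last by rewrite eqxx.
by move/(mass_neq0_has (R := R) (P := fun r => f r == s))/hasP => [r r_supp /eqP <-];
  apply: map_f.
Qed.

Lemma kpush_supp_dom s : s \in kpush_supp -> pdom s = Y.
Proof.
by rewrite kpush_supp_spec /kpush_fun; case: (pdom s =P Y); rewrite ?eqxx.
Qed.

Definition kpush : krel D2 K Y :=
  KRel kpush_supp_uniq kpush_supp_spec kpush_supp_dom.

Lemma kpushE t : kpush t = mass R (fun r => (f r == t) && (pdom (f r) == Y)).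
Proof.
rewrite /= /kpush_fun /mass; case: eqP => [<- | dom_t].
  by apply: eq_bigl => r; case: eqP => // ->; rewrite eqxx.
by rewrite big_pred0 // => r; case: eqP => // -> /=; case: eqP.
Qed.

Lemma mass_kpush P : mass kpush P = mass R (fun r => P (f r) && (pdom (f r) == Y)).
Proof.
rewrite /mass /= /kpush_supp big_filter_cond.
rewrite -(big_undup_partition _ _ _ (fun s => P s && (pdom s == Y))).
rewrite big_mkcond [RHS]big_mkcond; apply: eq_bigr => s _.
rewrite /kpush_fun; case: (P s); case: (pdom s == Y); rewrite ?andbT ?andbF //=;
  by case: ifP => // /negbFE/eqP.
Qed.

End Pushforward.

Lemma pdom_restr (D : V -> eqType) (B : {set V}) (r : ptuple D) :
  pdom (restr B r) = B :&: pdom r.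
Proof. by apply/setP => v; rewrite !inE ffunE; case: (v \in B). Qed.

Lemma mass_marg (D : V -> eqType) (B C X : {set V}) (T : krel D K C) (R : krel D K X)
    (Q : pred (ptuple D)) :
  (forall s, marg T B s = R s) -> B \subset C ->
  mass R Q = mass T (fun r => Q (restr B r)).
Proof.
move=> margT BC.
have restr_dom r : r \in ksupp T -> pdom (restr B r) == B.
  by move=> r_supp; rewrite pdom_restr (ksupp_dom r_supp) (setIidPl BC).
have -> : mass R Q = mass (kpush T (restr B) B) Q.
  apply: eq_mass_fun => s; rewrite -margT kpushE margE.
  by apply: eq_mass => r /restr_dom ->; rewrite andbT.
by rewrite mass_kpush; apply: eq_mass => r /restr_dom ->; rewrite andbT.
Qed.

Lemma krel0_supp_spec (D : V -> eqType) (r : ptuple D) :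
  (r \in [::]) = ((fun _ => 0 : K) r != 0).
Proof. by rewrite eqxx. Qed.

Definition krel0 (D : V -> eqType) (X : {set V}) : krel D K X :=
  @KRel V D K X (fun _ => 0) [::] erefl (@krel0_supp_spec D)
    (fun r (r_nil : r \in [::]) => False_ind _ (notF r_nil)).

End KRelations.

Section Padding.
Variables (V : finType) (D : V -> eqType) (W : {set V}).

(* [optdom D] adds the dummy value [None] to every domain, so in a padded
   tuple an attribute of A outside W is defined with value [Some None]. *)
Definition optdom : V -> eqType := fun v => (option (D v) : eqType).

Definition pad (A : {set V}) (r : ptuple D) : ptuple optdom :=
  [ffun v => if v \in A then
               if v \in W then omap Some (r v) else Some None
             else None].

Definition unpad (A : {set V}) (g : ptuple optdom) : ptuple D :=
  [ffun v => if v \in A then obind id (g v) else None].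

Lemma pdomP (r : ptuple D) v : (v \in pdom r) = (r v != None).
Proof. by rewrite inE. Qed.

Lemma pdom_pad (A : {set V}) (r : ptuple D) :
  A :&: W \subset pdom r -> pdom (pad A r) = A.
Proof.
move=> AW_dom; apply/setP => v; rewrite inE ffunE.
case vA: (v \in A) => //=; case vW: (v \in W) => //=.
have : v \in pdom r by apply: (subsetP AW_dom); rewrite inE vA vW.
by rewrite pdomP; case: (r v).
Qed.

Lemma restr_pad (A B : {set V}) (r : ptuple D) :
  B \subset A -> restr B (pad A r) = pad B r.
Proof.
move=> BA; apply/ffunP => v; rewrite !ffunE.
by case vB: (v \in B); rewrite ?(subsetP BA v vB).
Qed.

Lemma pad_restr (A C : {set V}) (r : ptuple D) :
  A :&: W \subset C -> pad A (restr C r) = pad A r.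
Proof.
move=> AW_C; apply/ffunP => v; rewrite !ffunE.
case vA: (v \in A) => //; case vW: (v \in W) => //.
by rewrite (subsetP AW_C) // inE vA vW.
Qed.

Lemma unpad_pad (Z X : {set V}) (r : ptuple D) :
  Z \subset W -> Z \subset X -> pdom r = Z -> unpad Z (pad X r) = r.
Proof.
move=> ZW ZX dom_r; apply/ffunP => v; rewrite !ffunE.
case vZ: (v \in Z); first by rewrite (subsetP ZX v vZ) (subsetP ZW v vZ); case: (r v).
by move: vZ; rewrite -dom_r pdomP; case: (r v).
Qed.

Lemma restr_unpad (Z U : {set V}) (g : ptuple optdom) :
  Z \subset U -> restr Z (unpad U g) = unpad Z g.
Proof.
move=> ZU; apply/ffunP => v; rewrite !ffunE.
by case vZ: (v \in Z); rewrite ?(subsetP ZU v vZ).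
Qed.

Lemma unpad_restr (Z X : {set V}) (g : ptuple optdom) :
  Z \subset X -> unpad Z (restr X g) = unpad Z g.
Proof.
move=> ZX; apply/ffunP => v; rewrite !ffunE.
by case vZ: (v \in Z); rewrite ?(subsetP ZX v vZ).
Qed.

Lemma marg_kpush_pad (K : nmodType) (C Z A Y : {set V}) (T : krel D K C)
    (RZ : krel D K Z) t :
  (forall s, marg T Z s = RZ s) -> Z \subset C -> A \subset Y ->
  A :&: W \subset Z -> Y :&: W \subset C ->
  marg (kpush T (pad Y) Y) A t = kpush RZ (pad A) A t.
Proof.
move=> margT ZC AY AW_Z YW_C.
rewrite margE mass_kpush kpushE (mass_marg _ margT ZC).
apply: eq_mass => r r_supp; have dom_r := ksupp_dom r_supp.
rewrite restr_pad // pad_restr // (pdom_pad (A := Y)) ?dom_r // eqxx andbT.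
by rewrite (pdom_pad (A := A)) ?eqxx ?andbT // dom_r (subset_trans AW_Z ZC).
Qed.

End Padding.

Section Hypergraphs.
Variable V : finType.
Implicit Types (H G : hypergraph V) (W X Y Z : {set V}).

Lemma induced_edge_inv H W Y :
  Y \in hedges (induced H W) -> exists2 X, X \in hedges H & Y = X :&: W.
Proof. by move=> /imsetP[X]; rewrite inE => /andP[XE _] ->; exists X. Qed.

Lemma induced_edge H W X :
  X \in hedges H -> X :&: W != set0 -> X :&: W \in hedges (induced H W).
Proof. by move=> XE XW_neq0; apply/imsetP; exists X; rewrite ?inE ?XE. Qed.

Lemma reduction_edge G Z : Z \in hedges (reduction G) -> Z \in hedges G.
Proof. by rewrite inE => /andP[]. Qed.

Lemma reduction_max G Z Y :
  Z \in hedges (reduction G) -> Y \in hedges G -> Z \subset Y -> Y = Z.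
Proof.
rewrite inE => /andP[_ /existsPn maxZ] YG ZY.
by have := maxZ Y; rewrite YG ZY /= negbK => /eqP.
Qed.

Lemma reduction_cover G Y :
  Y \in hedges G -> exists2 Z, Z \in hedges (reduction G) & Y \subset Z.
Proof.
move=> YG; pose P := [pred Z | (Z \in hedges G) && (Y \subset Z)].
have YP : P Y by rewrite /= YG subxx.
have [Z /andP[ZG YZ] maxZ] := arg_maxnP (fun Z => #|Z|) YP.
exists Z => //; rewrite inE ZG /=; apply/existsPn => Y'.
apply/negP => /and3P[Y'G ZY' Z_neq_Y'].
have : (#|Y'| <= #|Z|)%N by apply: maxZ; rewrite /= Y'G (subset_trans YZ ZY').
by rewrite leqNgt proper_card // properEneq Z_neq_Y' ZY'.
Qed.

Lemma exists_reduced_cover H W Z0 :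
  Z0 \in hedges (reduction (induced H W)) ->
  exists cover : {set V} -> {set V},
    (forall X, cover X \in hedges (reduction (induced H W))) /\
    (forall X, X \in hedges H -> X :&: W \subset cover X).
Proof.
move=> Z0E'; set E' := hedges _ in Z0E' *.
exists (fun X => odflt Z0 [pick Z in E' | X :&: W \subset Z]); split=> X.
  by case: pickP => //= Z /andP[].
move=> XE; case: pickP => [Z /andP[] // | /= noZ]; exfalso.
have [XW0 | XW_neq0] := eqVneq (X :&: W) set0.
  by have := noZ Z0; rewrite Z0E' XW0 sub0set.
have [Z ZE' XW_Z] := reduction_cover (induced_edge XE XW_neq0).
by have := noZ Z; rewrite ZE' XW_Z.
Qed.

End Hypergraphs.

Section Lift.
Variables (K : nmodType) (V : finType) (H : hypergraph V) (W : {set V}).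
Variables (D : V -> eqType) (R : forall X : {set V}, krel D K X).
Variable cover : {set V} -> {set V}.
Local Notation E := (hedges H).
Local Notation E' := (hedges (reduction (induced H W))).
Hypothesis cover_in : forall X, cover X \in E'.
Hypothesis cover_sub : forall X, X \in E -> X :&: W \subset cover X.

Definition lift X : krel (optdom D) K X := kpush (R (cover X)) (pad W X) X.

Lemma cover_reduced X : X \in E -> X :&: W \in E' -> cover X = X :&: W.
Proof.
move=> XE XW_E'; apply: reduction_max XW_E' _ (cover_sub XE).
exact: reduction_edge (cover_in X).
Qed.

Lemma lift_pairwise_consistent :
  pairwise_consistent E' R -> pairwise_consistent E lift.
Proof.
move=> pcR X Y XE YE; have [T [margTX margTY]] := pcR _ _ (cover_in X) (cover_in Y).
have XYW_sub : (X :|: Y) :&: W \subset cover X :|: cover Y.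
  by rewrite setIUl setUSS ?cover_sub.
exists (kpush T (pad W (X :|: Y)) (X :|: Y)); split=> t.
  by apply: marg_kpush_pad; rewrite ?subsetUl ?subsetUr ?cover_sub.
by apply: marg_kpush_pad; rewrite ?subsetUl ?subsetUr ?cover_sub.
Qed.

Lemma lift_supp_pad X s :
  s \in ksupp (lift X) -> exists2 r, r \in ksupp (R (cover X)) & s = pad W X r.
Proof.
rewrite ksupp_spec kpushE => /mass_neq0_has/hasP[r r_supp /andP[/eqP <- _]].
by exists r.
Qed.

Section Witness.
Variable G : krel (optdom D) K (\bigcup_(X in E) X).
Hypothesis margG : forall X, X \in E -> forall t, marg G X t = lift X t.
Hypothesis posK : positive_monoid K.
Local Notation U := (\bigcup_(Z in E') Z).

Lemma pdom_unpad_supp g : g \in ksupp G -> pdom (unpad U g) = U.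
Proof.
move=> g_supp; apply/setP => v; rewrite inE ffunE.
case vU: (v \in U); last by rewrite eqxx.
have [_ /reduction_edge/induced_edge_inv[X XE ->]] := bigcupP vU.
rewrite inE => /andP[vX vW].
have : marg G X (restr X g) != 0.
  by rewrite margE; apply: (positive_mass_neq0 (P := fun r => _ == _) posK g_supp).
rewrite margG // -ksupp_spec => /lift_supp_pad[r r_supp /ffunP/(_ v)].
rewrite !ffunE vX vW => ->.
have : v \in pdom r.
  by rewrite (ksupp_dom r_supp); apply: (subsetP (cover_sub XE)); rewrite inE vX.
by rewrite pdomP; case: (r v).
Qed.

Lemma marg_unpad_witness Z t : Z \in E' -> marg (kpush G (unpad U) U) Z t = R Z t.
Proof.
move=> ZE'; have [X XE defZ] := induced_edge_inv (reduction_edge ZE').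
have coverX : cover X = Z by rewrite defZ cover_reduced -?defZ.
have ZW : Z \subset W by rewrite defZ subsetIr.
have ZX : Z \subset X by rewrite defZ subsetIl.
have ZU : Z \subset U by apply: bigcup_sup.
have XU : X \subset \bigcup_(X in E) X by apply: bigcup_sup.
rewrite margE mass_kpush (eq_mass (Q := fun g => unpad Z (restr X g) == t)); last first.
  by move=> g g_supp; rewrite pdom_unpad_supp // eqxx andbT restr_unpad ?unpad_restr.
rewrite -(mass_marg (fun s => unpad Z s == t) (margG XE) XU).
rewrite /lift coverX mass_kpush -mass_pred1; apply: eq_mass => r r_supp.
have dom_r := ksupp_dom r_supp.
by rewrite unpad_pad // pdom_pad ?eqxx ?andbT // dom_r defZ.
Qed.

Lemma unpad_globally_consistent : globally_consistent E' R.
Proof.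
by exists (kpush G (unpad U) U) => Z ZE' t; apply: marg_unpad_witness.
Qed.

End Witness.
End Lift.

Unset Implicit Arguments.

Theorem corollary9 (K : nmodType) (V : finType) (H : hypergraph V) :
  positive_monoid K -> wf_hypergraph H -> local_to_global K H ->
  forall W : {set V}, W \subset hverts H ->
    local_to_global K (reduction (induced H W)).
Proof.
move=> posK _ l2gH W _ D R pcR.
have [E'0 | [Z0 Z0E']] := set_0Vmem (hedges (reduction (induced H W))).
  by exists (krel0 K D _) => X; rewrite E'0 inE.
have [cover [cover_in cover_sub]] := exists_reduced_cover Z0E'.
have [G margG] := l2gH _ _ (lift_pairwise_consistent cover_in cover_sub pcR).
exact: unpad_globally_consistent margG posK.
Qed.
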